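(* Let $\Pi$ be an indecomposable reduced crystallographic root system. Let $\gamma \in \Pi_+$, $\alpha \in \Delta$ and an integer $c > 0$ be such that $\gamma - c\alpha \in \Pi_+$. Let $\beta \in \Pi_+$ satisfy $\beta \le \gamma$, $c_\alpha(\beta) = c_\alpha(\gamma)$ and $\beta \neq \alpha$. Then $\beta - c\alpha \in \Pi_+$.
   Context: $\Delta$ denotes the simple roots and $\Pi_+$ the positive roots. For a root $\beta$, $c_\alpha(\beta)$ is the coefficient of $\alpha$ in the expansion $\beta = \sum_{\alpha\in\Delta} c_\alpha(\beta)\alpha$. $\beta\le\gamma$ iff $\gamma-\beta$ is a nonnegative integer combination of simple roots. *)

From HB Require Import structures.
From mathcomp Require Import all_boot all_order all_algebra.
Set Implicit Arguments. Unset Strict Implicit. Unset Printing Implicit Defensive.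
Import Order.TTheory GRing.Theory Num.Theory.
Local Open Scope ring_scope.

Section RootSystems.
Variables (R : realFieldType) (n : nat).

Definition dot (u v : 'rV[R]_n) : R := (u *m v^T) 0 0.

Definition cartan (b a : 'rV[R]_n) : R := 2 * dot b a / dot a a.

Definition roots_mx (Phi : seq 'rV[R]_n) : 'M[R]_(size Phi, n) :=
  \matrix_(i < size Phi) nth 0 Phi i.

Definition reduced_crystallographic_root_system (Phi : seq 'rV[R]_n) : Prop :=
  [/\ (0 : 'rV[R]_n) \notin Phi,
      row_full (roots_mx Phi),
      (forall a b, a \in Phi -> b \in Phi -> b - cartan b a *: a \in Phi),
      (forall a b, a \in Phi -> b \in Phi -> exists z : int, cartan b a = z%:~R)
    & (forall a (k : R), a \in Phi -> k *: a \in Phi -> k = 1 \/ k = -1)].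

Definition indecomposable (Phi : seq 'rV[R]_n) : Prop :=
  forall P : pred 'rV[R]_n,
    (forall a b, a \in Phi -> b \in Phi -> P a -> ~~ P b -> dot a b = 0) ->
    all P Phi \/ all (predC P) Phi.

Definition icomb r (k : 'rV[int]_r) (D : 'M[R]_(r, n)) : 'rV[R]_n :=
  map_mx (fun z : int => z%:~R) k *m D.

Definition nonneg_row r (k : 'rV[int]_r) : Prop := forall i, 0 <= k 0 i.
Definition nonpos_row r (k : 'rV[int]_r) : Prop := forall i, k 0 i <= 0.

(* The rows of D form a set Delta of simple roots (a base) of Phi:
   they are roots, linearly independent, and every root is an integer
   combination of them with coefficients all >= 0 or all <= 0. *)
Definition simple_roots (Phi : seq 'rV[R]_n) r (D : 'M[R]_(r, n)) : Prop :=
  [/\ (forall i, row i D \in Phi),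
      row_free D
    & (forall b, b \in Phi -> exists k : 'rV[int]_r,
          b = icomb k D /\ (nonneg_row k \/ nonpos_row k))].

Definition pos_root (Phi : seq 'rV[R]_n) r (D : 'M[R]_(r, n)) (b : 'rV[R]_n) :=
  b \in Phi /\ exists k : 'rV[int]_r, nonneg_row k /\ b = icomb k D.

Definition root_le r (D : 'M[R]_(r, n)) (b g : 'rV[R]_n) : Prop :=
  exists k : 'rV[int]_r, nonneg_row k /\ g - b = icomb k D.

(* c_{alpha_a}(b): coefficient of the a-th simple root in b
   (well defined since D is row-free and b lies in its row space) *)
Definition coef r (D : 'M[R]_(r, n)) (a : 'I_r) (b : 'rV[R]_n) : R :=
  (b *m pinvmx D) 0 a.

End RootSystems.

(* If [gamma - c alpha] is a root, so is every [gamma - j alpha] (j <= c), since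
   alpha-strings are unbroken.  Hence it suffices to treat c = 1 and iterate,
   replacing [gamma, beta] by [gamma - j alpha, beta - j alpha].  For c = 1 one
   descends on the height of [gamma - beta = sum_i d_i alpha_i] (d_alpha = 0):
   if some alpha_i in the support of d has (alpha_i, gamma) > 0, then
   gamma - alpha_i is a smaller valid choice of gamma; otherwise
   (beta, gamma) >= (gamma, gamma) > 0, while (beta, gamma - alpha) <= 0 because
   beta - (gamma - alpha) = alpha - sum_i d_i alpha_i has mixed signs, so
   (beta, alpha) > 0 and beta - alpha is a root. *)
From HB Require Import structures.
From mathcomp Require Import all_boot all_order all_algebra.
From mathcomp Require Import ring lra zify.
Set Implicit Arguments. Unset Strict Implicit. Unset Printing Implicit Defensive.
Import Order.TTheory GRing.Theory Num.Theory.
Local Open Scope ring_scope.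

Section Dot.
Variables (R : realFieldType) (n : nat).
Implicit Types u v w : 'rV[R]_n.

Lemma dotC u v : dot u v = dot v u.
Proof. by rewrite /dot -[u *m v^T]trmxK trmx_mul trmxK mxE. Qed.

Lemma dotDl u w v : dot (u + w) v = dot u v + dot w v.
Proof. by rewrite /dot mulmxDl mxE. Qed.

Lemma dotZl k u v : dot (k *: u) v = k * dot u v.
Proof. by rewrite /dot -scalemxAl mxE. Qed.

Lemma dotNl u v : dot (- u) v = - dot u v.
Proof. by rewrite -scaleN1r dotZl mulN1r. Qed.

Lemma dotBl u w v : dot (u - w) v = dot u v - dot w v.
Proof. by rewrite dotDl dotNl. Qed.

Lemma dot0l v : dot 0 v = 0.
Proof. by rewrite /dot mul0mx mxE. Qed.

Lemma dotZr k u v : dot u (k *: v) = k * dot u v.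
Proof. by rewrite dotC dotZl dotC. Qed.

Lemma dotBr u v w : dot u (v - w) = dot u v - dot u w.
Proof. by rewrite dotC dotBl !(dotC u). Qed.

Lemma dot_gt0 u : u != 0 -> 0 < dot u u.
Proof.
move=> /rV0Pn [j uj_nz].
have -> : dot u u = \sum_j u 0 j ^+ 2.
  by rewrite /dot mxE; apply: eq_bigr => i _; rewrite mxE.
rewrite (bigD1 j) //=; apply: ltr_pwDl.
- by rewrite lt_def sqrf_eq0 uj_nz sqr_ge0.
- by apply: sumr_ge0 => i _; apply: sqr_ge0.
Qed.

Lemma dot_sqr_ge_colinear u v : v != 0 -> dot u u * dot v v <= dot u v ^+ 2 ->
  u = (dot u v / dot v v) *: v.
Proof.
move=> v_nz CS; have vv_gt0 := dot_gt0 v_nz.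
set t := dot u v / dot v v; apply/eqP; rewrite -subr_eq0.
apply: contraTT CS => /dot_gt0; rewrite -ltNge.
rewrite dotBl !dotBr !dotZl !dotZr (dotC v u) /t.
rewrite (_ : _ - _ = (dot u u * dot v v - dot u v ^+ 2) / dot v v); last first.
  by field; rewrite gt_eqF.
by rewrite pmulr_lgt0 ?invr_gt0 // subr_gt0.
Qed.

End Dot.

Lemma subr_scale_natS (R : pzRingType) (V : lmodType R) (x y : V) k :
  x - k%:R *: y - y = x - k.+1%:R *: y.
Proof. by rewrite -natr1 scalerDl scale1r opprD addrA. Qed.

Section RootSystem.
Variables (R : realFieldType) (n : nat) (Phi : seq 'rV[R]_n).
Hypothesis HPhi : reduced_crystallographic_root_system Phi.
Implicit Types x y al : 'rV[R]_n.

Lemma root_neq0 x : x \in Phi -> x != 0.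
Proof. by case: HPhi => Phi_0 _ _ _ _ Hx; apply: contraNneq Phi_0 => <-. Qed.

Lemma rootN x : x \in Phi -> - x \in Phi.
Proof.
move=> Hx; case: HPhi => _ _ Hrefl _ _.
have := Hrefl x x Hx Hx; have xx_gt0 := dot_gt0 (root_neq0 Hx).
have -> : cartan x x = 2 by rewrite /cartan mulfK // gt_eqF.
by rewrite scaler_nat mulr2n opprD addrA subrr add0r.
Qed.

Lemma root_natr_scale_eq1 al k : al \in Phi -> k%:R *: al \in Phi -> k = 1%N.
Proof.
case: HPhi => _ _ _ _ Hred Ha Hka.
have [k0|k_gt0] := posnP k.
  by move: (root_neq0 Hka); rewrite k0 scale0r eqxx.
have [/eqP|k_neg] := Hred al _ Ha Hka; first by rewrite pnatr_eq1 => /eqP.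
by move: (ltr0Sn R k.-1); rewrite prednK // k_neg ltr0N1.
Qed.

Lemma root_sub x y : x \in Phi -> y \in Phi -> 0 < dot x y -> x != y ->
  x - y \in Phi.
Proof.
move=> Hx Hy xy_gt0 x_neq_y; case: HPhi => _ _ Hrefl Hint Hred.
have xx_gt0 := dot_gt0 (root_neq0 Hx); have yy_gt0 := dot_gt0 (root_neq0 Hy).
have CS : dot x y ^+ 2 < dot x x * dot y y.
  rewrite ltNge; apply/negP => /(dot_sqr_ge_colinear (root_neq0 Hy)) xE.
  have := Hred y (dot x y / dot y y) Hy; rewrite -xE => /(_ Hx) [t1|tN1].
    by move: x_neq_y; rewrite xE t1 scale1r eqxx.
  by move: xy_gt0; rewrite xE tN1 scaleN1r dotNl oppr_gt0 ltNge ltW.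
have [z1 Hz1] := Hint y x Hy Hx; have [z2 Hz2] := Hint x y Hx Hy.
have z1_gt0 : 0 < z1 by rewrite -(ltr0z R) -Hz1 /cartan divr_gt0 ?mulr_gt0.
have z2_gt0 : 0 < z2 by rewrite -(ltr0z R) -Hz2 /cartan dotC divr_gt0 ?mulr_gt0.
(* The product of the two Cartan numbers is 4 cos^2 of the angle, hence < 4. *)
have z12_lt4 : z1 * z2 < 4.
  rewrite -(ltr_int R) intrM -Hz1 -Hz2 /cartan (dotC y x).
  have -> : 2 * dot x y / dot y y * (2 * dot x y / dot x x) =
      4 * (dot x y ^+ 2 / (dot x x * dot y y)) by field; rewrite !gt_eqF.
  have : dot x y ^+ 2 / (dot x x * dot y y) < 1 by rewrite ltr_pdivrMr ?mul1r ?mulr_gt0.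
  rewrite (_ : 4%:~R = 4) //; lra.
have [z1E|z2E] : z1 = 1 \/ z2 = 1 by nia.
  by have := Hrefl y x Hy Hx; rewrite Hz1 z1E scale1r.
by have := rootN (Hrefl x y Hx Hy); rewrite Hz2 z2E scale1r opprB.
Qed.

Lemma root_sub_natr_scale x al j : x \in Phi -> al \in Phi -> x != al ->
  (j%:R - 1) * dot al al < dot x al -> x - j%:R *: al \in Phi.
Proof.
move=> Hx Ha x_neq_a; have aa_gt0 := dot_gt0 (root_neq0 Ha).
elim: j => [|j IH] lt_j; first by rewrite scale0r subr0.
rewrite -natr1 in lt_j; have Hxj : x - j%:R *: al \in Phi by apply: IH; lra.
have xj_neq_a : x - j%:R *: al != al.
  apply: contraNneq x_neq_a => xjE.
  have xE : x = (j.+1)%:R *: al.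
    by rewrite -natr1 scalerDl scale1r -{2}xjE addrC subrK.
  have j1 : j.+1 = 1%N by apply: root_natr_scale_eq1 Ha _; rewrite -xE.
  by rewrite xE j1 scale1r eqxx.
rewrite -subr_scale_natS; apply: (root_sub Hxj Ha _ xj_neq_a).
by rewrite dotBl dotZl; lra.
Qed.

Lemma root_string x al N j : x \in Phi -> al \in Phi -> x != al ->
  x - N%:R *: al \in Phi -> (j <= N)%N -> x - j%:R *: al \in Phi.
Proof.
move=> Hx Ha x_neq_a HN le_jN.
have [lt_j|ge_j] := ltP ((j%:R - 1) * dot al al) (dot x al).
  exact: root_sub_natr_scale.
have [->|j_gt0] := posnP j; first by rewrite scale0r subr0.
have [M NE] : exists M, N = M.+1 by exists N.-1; rewrite prednK // (leq_trans j_gt0).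
have aa_gt0 := dot_gt0 (root_neq0 Ha).
(* Walk up the string from its other end: descend from -(x - N al). *)
have y_neq_a : - (x - N%:R *: al) != al.
  apply: contraNneq x_neq_a => /(canRL (@opprK _)) xNE.
  have xE : x = M%:R *: al.
    by apply/rowP => k; move/rowP/(_ k): xNE; rewrite NE !mxE -natr1 => xNE; lra.
  have M1 : M = 1%N by apply: root_natr_scale_eq1 Ha _; rewrite -xE.
  by rewrite xE M1 scale1r eqxx.
have Hy : - (x - N%:R *: al) - (N - j)%:R *: al \in Phi.
  apply: root_sub_natr_scale (rootN HN) Ha y_neq_a _.
  by rewrite dotNl dotBl dotZl natrB //; nra.
have -> : x - j%:R *: al = - (- (x - N%:R *: al) - (N - j)%:R *: al).
  by apply/rowP => k; rewrite !mxE natrB //; ring.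
exact: rootN.
Qed.

End RootSystem.

Section SimpleRoots.
Variables (R : realFieldType) (n r : nat) (Phi : seq 'rV[R]_n) (D : 'M[R]_(r, n)).
Hypothesis HPhi : reduced_crystallographic_root_system Phi.
Hypothesis HD : simple_roots Phi D.
Implicit Types (k d : 'rV[int]_r) (x g b : 'rV[R]_n).

Definition unitv (i : 'I_r) : 'rV[int]_r := delta_mx 0 i.

Lemma unitvE i j : unitv i 0 j = (j == i)%:R.
Proof. by rewrite /unitv mxE eqxx. Qed.

Lemma sum_unitv i : \sum_j unitv i 0 j = 1.
Proof.
rewrite (bigD1 i) //= unitvE eqxx big1 ?addr0 // => j /negbTE j_neq_i.
by rewrite unitvE j_neq_i.
Qed.

Lemma icombD k1 k2 : icomb (k1 + k2) D = icomb k1 D + icomb k2 D.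
Proof. by rewrite /icomb map_mxD mulmxDl. Qed.

Lemma icombB k1 k2 : icomb (k1 - k2) D = icomb k1 D - icomb k2 D.
Proof. by rewrite icombD /icomb map_mxN mulNmx. Qed.

Lemma icomb0 : icomb 0 D = 0.
Proof. by rewrite /icomb map_mx0 mul0mx. Qed.

Lemma icombMn k m : icomb (k *+ m) D = icomb k D *+ m.
Proof. by elim: m => [|m IH]; rewrite ?mulr0n ?icomb0 // !mulrS icombD IH. Qed.

Lemma icomb_unitv i : icomb (unitv i) D = row i D.
Proof. by rewrite /icomb /unitv map_delta_mx rowE. Qed.

Lemma icombE k : icomb k D = \sum_i (k 0 i)%:~R *: row i D.
Proof. by rewrite /icomb mulmx_sum_row; apply: eq_bigr => i _; rewrite mxE. Qed.

Lemma icomb_inj : injective (fun k : 'rV[int]_r => icomb k D).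
Proof.
case: HD => _ D_free _ k1 k2 /(row_free_inj D_free) Ek.
apply/rowP => j; move/rowP/(_ j): Ek; rewrite !mxE; exact: intr_inj.
Qed.

Lemma coef_icomb a k : coef D a (icomb k D) = (k 0 a)%:~R.
Proof.
by case: HD => _ D_free _; rewrite /coef /icomb -mulmxA mulmxVp ?mulmx1 ?mxE.
Qed.

Lemma simple_root i : row i D \in Phi.
Proof. by case: HD. Qed.

Lemma root_not_mixed x k i j : x \in Phi -> x = icomb k D ->
  0 < k 0 i -> k 0 j < 0 -> False.
Proof.
case: HD => _ _ Hcoord Hx xE ki_gt0 kj_lt0.
have [k' [xE' [k'_ge0|k'_le0]]] := Hcoord x Hx; rewrite xE in xE'.
  by move: (k'_ge0 j); rewrite -(icomb_inj xE') leNgt kj_lt0.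
by move: (k'_le0 i); rewrite -(icomb_inj xE') leNgt ki_gt0.
Qed.

Lemma simple_row_inj : injective (fun i : 'I_r => row i D).
Proof.
move=> i j; rewrite -!icomb_unitv => /icomb_inj/rowP/(_ i).
by rewrite !unitvE eqxx; case: eqP => // _ /eqP; rewrite oner_eq0.
Qed.

Lemma dot_simple_le0 i j : i != j -> dot (row i D) (row j D) <= 0.
Proof.
move=> i_neq_j; rewrite leNgt; apply/negP => ij_gt0.
have rij_neq : row i D != row j D by apply: contra_neq i_neq_j => /simple_row_inj.
have := root_sub HPhi (simple_root i) (simple_root j) ij_gt0 rij_neq.
rewrite -!icomb_unitv -icombB.
move=> /(root_not_mixed (i := i) (j := j)) /(_ (erefl _)); apply.
  by rewrite !mxE !eqxx (negbTE i_neq_j) subr0.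
by rewrite !mxE !eqxx eq_sym (negbTE i_neq_j) sub0r oppr_lt0.
Qed.

Lemma simple_sub_icomb_notin a d : nonneg_row d -> d 0 a = 0 -> d != 0 ->
  row a D - icomb d D \notin Phi.
Proof.
move=> d_ge0 da0 /rV0Pn [j dj_nz]; apply/negP => Hx.
have j_neq_a : j != a by apply: contraNneq dj_nz => ->; rewrite da0.
apply: (root_not_mixed (k := unitv a - d) (i := a) (j := j) Hx).
- by rewrite icombB icomb_unitv.
- by rewrite !mxE !eqxx da0 subr0.
- by rewrite !mxE eqxx (negbTE j_neq_a) sub0r oppr_lt0 lt_def dj_nz d_ge0.
Qed.

Lemma dot_icomb_le0 d g : nonneg_row d ->
  (forall i, 0 < d 0 i -> dot (row i D) g <= 0) -> dot (icomb d D) g <= 0.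
Proof.
move=> d_ge0 dot_le0; rewrite icombE.
rewrite (big_morph (fun u => dot u g) (fun u w => dotDl u w g) (dot0l g)).
apply: sumr_le0 => i _; rewrite dotZl.
have [di0|di_gt0] := eqVneq (d 0 i) 0; first by rewrite di0 mul0r.
apply: mulr_ge0_le0; first by rewrite ler0z.
by apply: dot_le0; rewrite lt_def di_gt0 d_ge0.
Qed.

Lemma root_le_simple_add a i b d : b \in Phi ->
  row a D + row i D - b = icomb d D -> nonneg_row d -> d 0 a = 0 ->
  0 < d 0 i -> b = row a D.
Proof.
move=> Hb bE d_ge0 da0 di_gt0.
have i_neq_a : i != a by apply: contraTneq di_gt0 => ->; rewrite da0 ltxx.
set k := unitv a + unitv i - d.
have bkE : b = icomb k D.
  rewrite icombB icombD !icomb_unitv -bE.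
  by apply/rowP => j; rewrite !mxE; ring.
(* b has a positive coordinate at a, hence no negative one *)
have k_ge0 j : 0 <= k 0 j.
  rewrite leNgt; apply/negP => /(root_not_mixed (i := a) Hb bkE); apply.
  by rewrite !mxE !eqxx da0 eq_sym (negbTE i_neq_a) subr0.
suff dE : d = unitv i.
  by rewrite bkE /k dE addrK icomb_unitv.
apply/rowP => j; move: (k_ge0 j) (d_ge0 j); rewrite !mxE eqxx /=.
have [->|j_neq_a] := eqVneq j a; first by rewrite da0 eq_sym (negbTE i_neq_a).
have [->|j_neq_i] := eqVneq j i; last by lia.
by move: di_gt0; lia.
Qed.

End SimpleRoots.

Section SubSimpleRoot.
Variables (R : realFieldType) (n r : nat) (Phi : seq 'rV[R]_n) (D : 'M[R]_(r, n)).
Hypothesis HPhi : reduced_crystallographic_root_system Phi.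
Hypothesis HD : simple_roots Phi D.
Variables (a : 'I_r) (b : 'rV[R]_n).
Hypotheses (Hb : b \in Phi) (b_neq_a : b != row a D).
Implicit Types (d : 'rV[int]_r) (g : 'rV[R]_n).

Lemma sub_simple_descend g d i : g \in Phi -> g - row a D \in Phi ->
  g - b = icomb d D -> nonneg_row d -> d 0 a = 0 ->
  0 < d 0 i -> 0 < dot (row i D) g ->
  g - row i D \in Phi /\ g - row i D - row a D \in Phi.
Proof.
move=> Hg Hga gbE d_ge0 da0 di_gt0 ig_gt0.
have i_neq_a : i != a by apply: contraTneq di_gt0 => ->; rewrite da0 ltxx.
have g_neq_i : g != row i D.
  apply: contraTneq Hga => ->; apply/negP => /(root_not_mixed HD (i := i) (j := a)).
  rewrite -!icomb_unitv -icombB => /(_ _ (erefl _)); apply.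
    by rewrite !mxE !eqxx (negbTE i_neq_a) subr0.
  by rewrite !mxE !eqxx eq_sym (negbTE i_neq_a) sub0r oppr_lt0.
have gi_gt0 : 0 < dot g (row i D) by rewrite dotC.
split; first exact: (root_sub HPhi Hg (simple_root HD i) gi_gt0 g_neq_i).
have ga_neq_i : g - row a D != row i D.
  apply: contra_neq b_neq_a => gaE.
  apply: (root_le_simple_add HD Hb _ d_ge0 da0 di_gt0).
  by rewrite -gaE (addrC (row a D)) subrK.
have gai_gt0 : 0 < dot (g - row a D) (row i D).
  by have := dot_simple_le0 HPhi HD i_neq_a; rewrite dotBl (dotC g) dotC; lra.
by rewrite addrAC; exact: (root_sub HPhi Hga (simple_root HD i) gai_gt0 ga_neq_i).
Qed.

Lemma sub_simple_of_dot_le0 g d : g \in Phi -> g - row a D \in Phi ->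
  g - b = icomb d D -> nonneg_row d -> d 0 a = 0 ->
  (forall i, 0 < d 0 i -> dot (row i D) g <= 0) -> b - row a D \in Phi.
Proof.
move=> Hg Hga gbE d_ge0 da0 dot_le0.
have [d0|d_nz] := eqVneq d 0.
  by move/eqP: gbE; rewrite d0 icomb0 subr_eq0 => /eqP <-.
have bE : b = g - icomb d D by rewrite -gbE opprB addrC subrK.
have bg_gt0 : 0 < dot b g.
  have := dot_gt0 (root_neq0 HPhi Hg); have := dot_icomb_le0 d_ge0 dot_le0.
  rewrite bE dotBl; lra.
have b_neq_ga : b != g - row a D.
  apply/eqP => bE'; have dE : d = unitv a.
    by apply: (icomb_inj HD); rewrite icomb_unitv -gbE bE' opprB addrC subrK.
  by move/eqP: da0; rewrite dE unitvE eqxx oner_eq0.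
(* b - (g - alpha) = alpha - sum_i d_i alpha_i is not a root *)
have bga_le0 : dot b (g - row a D) <= 0.
  rewrite leNgt; apply: contraNN (simple_sub_icomb_notin HD d_ge0 da0 d_nz) => pos.
  rewrite (_ : _ - _ = b - (g - row a D)).
    exact: (root_sub HPhi Hb Hga pos b_neq_ga).
  by rewrite -gbE; apply/rowP => j; rewrite !mxE; ring.
have ba_gt0 : 0 < dot b (row a D) by move: bga_le0; rewrite dotBr; lra.
exact: (root_sub HPhi Hb (simple_root HD a) ba_gt0 b_neq_a).
Qed.

Lemma root_sub_simple g d : g \in Phi -> g - row a D \in Phi ->
  g - b = icomb d D -> nonneg_row d -> d 0 a = 0 -> b - row a D \in Phi.
Proof.
move=> + + + d_ge0; have : \sum_(i < r) d 0 i < (absz (\sum_(i < r) d 0 i)).+1%:Z.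
  by move: (\sum_(i < r) d 0 i) => s; lia.
move: (absz _).+1 => h; elim: h g d d_ge0 => [|h IH] g d d_ge0 ht Hg Hga gbE da0.
  have sum_ge0 : 0 <= \sum_(i < r) d 0 i by apply: sumr_ge0 => i _; apply: d_ge0.
  by rewrite ltNge sum_ge0 in ht.
have [/existsP [i /andP [di_gt0 ig_gt0]] | /existsPn no_i] :=
  boolP [exists i, (0 < d 0 i) && (0 < dot (row i D) g)].
  have [Hgi Hgia] := sub_simple_descend Hg Hga gbE d_ge0 da0 di_gt0 ig_gt0.
  apply: (IH (g - row i D) (d - unitv i)) => //.
  - move=> j; rewrite !mxE eqxx /=; case: eqVneq => [->|_]; last by rewrite subr0.
    by move: di_gt0; lia.
  - suff -> : \sum_j (d - unitv i) 0 j = \sum_j d 0 j - 1.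
      by move: ht; rewrite -[h.+1]addn1 PoszD ltrBlDr.
    by rewrite -(sum_unitv i) -sumrB; apply: eq_bigr => j _; rewrite !mxE.
  - by rewrite icombB icomb_unitv -gbE addrAC.
  - have [ai|a_neq_i] := eqVneq a i; first by move: di_gt0; rewrite -ai da0.
    by rewrite !mxE eqxx da0 (negbTE a_neq_i) subr0.
apply: (sub_simple_of_dot_le0 Hg Hga gbE d_ge0 da0) => i di_gt0.
by move: (no_i i); rewrite di_gt0 /= leNgt.
Qed.

End SubSimpleRoot.

Lemma root_sub_natr_simple (R : realFieldType) (n r : nat) (Phi : seq 'rV[R]_n)
    (D : 'M[R]_(r, n)) a b g d c :
  reduced_crystallographic_root_system Phi -> simple_roots Phi D ->
  b \in Phi -> b != row a D -> (0 < c)%N ->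
  g \in Phi -> g - c%:R *: row a D \in Phi ->
  g - b = icomb d D -> nonneg_row d -> d 0 a = 0 ->
  b - c%:R *: row a D \in Phi.
Proof.
move=> HPhi HD Hb b_neq_a; elim: c g => [//|[|c] IH] g _ Hg Hgc gbE d_ge0 da0.
  by move: Hgc; rewrite !scale1r => Hga; exact: root_sub_simple Hga gbE d_ge0 da0.
have g_neq_a : g != row a D.
  apply: contra_neq b_neq_a => gaE.
  have [d0|d_nz] := eqVneq d 0.
    by move/eqP: gbE; rewrite d0 icomb0 subr_eq0 gaE => /eqP.
  have := simple_sub_icomb_notin HD d_ge0 da0 d_nz.
  by rewrite -gbE gaE opprB addrC subrK Hb.
have Hgc1 := root_string HPhi Hg (simple_root HD a) g_neq_a Hgc (leqnSn _).
have Hbc1 := IH g isT Hg Hgc1 gbE d_ge0 da0.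
have bc1_neq_a : b - c.+1%:R *: row a D != row a D.
  apply: contraTneq Hb => bc1E.
  have -> : b = c.+2%:R *: row a D.
    by apply/rowP => j; move/rowP/(_ j): bc1E; rewrite !mxE -!natr1; lra.
  apply/negP => /(root_natr_scale_eq1 HPhi (simple_root HD a)) //.
have gbE' : g - c.+1%:R *: row a D - (b - c.+1%:R *: row a D) = icomb d D.
  by rewrite -gbE opprB addrA subrK.
rewrite -subr_scale_natS.
apply: (root_sub_simple HPhi HD Hbc1 bc1_neq_a Hgc1 _ gbE' d_ge0 da0).
by rewrite subr_scale_natS.
Qed.

Theorem lemma4 (R : realFieldType) (n r : nat) (Phi : seq 'rV[R]_n)
    (D : 'M[R]_(r, n)) (g b : 'rV[R]_n) (a : 'I_r) (c : nat) :
  reduced_crystallographic_root_system Phi ->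
  indecomposable Phi ->
  simple_roots Phi D ->
  pos_root Phi D g ->
  (0 < c)%N ->
  pos_root Phi D (g - c%:R *: row a D) ->
  pos_root Phi D b ->
  root_le D b g ->
  coef D a b = coef D a g ->
  b != row a D ->
  pos_root Phi D (b - c%:R *: row a D).
Proof.
move=> HPhi _ HD [Hg [kg [_ gE]]] c_gt0 [Hgc [kgc [kgc_ge0 gcE]]]
  [Hb [kb [kb_ge0 bE]]] [d [d_ge0 gbE]] coef_ab b_neq_a.
have kb_a : kb 0 a = kg 0 a.
  by apply/eqP; rewrite -(eqr_int R) -!(coef_icomb HD) -bE -gE coef_ab.
have da0 : d 0 a = 0.
  have -> : d = kg - kb by apply: (icomb_inj HD); rewrite icombB -gbE -gE -bE.
  by rewrite !mxE kb_a subrr.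
have kgcE : kgc = kg - unitv a *+ c.
  by apply: (icomb_inj HD); rewrite icombB icombMn icomb_unitv -gcE -gE scaler_nat.
split.
  exact: (root_sub_natr_simple HPhi HD Hb b_neq_a c_gt0 Hg Hgc gbE d_ge0 da0).
exists (kb - unitv a *+ c); split.
  move=> j; move: (kgc_ge0 j); rewrite kgcE !mxE !mulmxnE unitvE.
  by case: eqVneq => [->|_]; rewrite ?kb_a // mulr0n mul0rn !subr0 => _; exact: kb_ge0.
by rewrite icombB icombMn icomb_unitv -bE scaler_nat.
Qed.
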